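(* Let $T \ge 1$ and $m_u \ge 1$ be integers. Let $\mathscr V_0^*$ be a finite collection of pairwise disjoint intervals of the form $\mathcal V_0 = [(\underline v_{t|0})_{t=0}^{T-1}, (\bar v_{t|0})_{t=0}^{T-1}] \subset \mathbb R^{T m_u}$, with $\underline v_{t|0}, \bar v_{t|0} \in \{0,1\}^{m_u}$ and $\underline v_{t|0} \le \bar v_{t|0}$, whose union contains $\{0,1\}^{T m_u}$. Let $v_0 \in \{0,1\}^{m_u}$. Let $\mathscr V_1^0$ be the collection obtained as follows: for every $\mathcal V_0 \in \mathscr V_0^*$ satisfying $\underline v_{0|0} \le v_0 \le \bar v_{0|0}$, include the interval $$\mathcal V_1 := [(\underline v_{1|0}, \ldots, \underline v_{T-1|0}, 0, \ldots, 0), (\bar v_{1|0}, \ldots, \bar v_{T-1|0}, 1, \ldots, 1)],$$ where the trailing blocks of zeros and ones each have $m_u$ entries; intervals $\mathcal V_0$ not satisfying this condition are discarded. Then the union of the sets in $\mathscr V_1^0$ contains $\{0,1\}^{T m_u}$, and the sets in $\mathscr V_1^0$ are pairwise disjoint intervals.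
   Context: For $a, b \in \mathbb R^{N}$ with $a \le b$ componentwise, $[a,b]$ denotes the box $\{z \in \mathbb R^N : a \le z \le b\}$. A vector in $\mathbb R^{T m_u}$ is viewed as a concatenation $(v_0, \ldots, v_{T-1})$ of $T$ blocks $v_t \in \mathbb R^{m_u}$; inequalities between vectors are componentwise. *)

(* A vector of R^{T m_u}, viewed as the concatenation
   (v_0, ..., v_{T-1}) of T blocks of size m_u, is represented as a matrix
   'M[R]_(T, mu) whose row t is the block v_t. *)
From HB Require Import structures.
From mathcomp Require Import all_boot all_order all_algebra.
Set Implicit Arguments. Unset Strict Implicit. Unset Printing Implicit Defensive.
Import Order.TTheory GRing.Theory Num.Theory.
Local Open Scope ring_scope.

Section Defs.
Variables (R : realFieldType) (T mu : nat).

Notation vec := 'M[R]_(T, mu).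

Definition in_box (a b z : vec) : Prop :=
  forall (t : 'I_T) (i : 'I_mu), a t i <= z t i /\ z t i <= b t i.

Definition binary (z : vec) : Prop :=
  forall (t : 'I_T) (i : 'I_mu), z t i = 0 \/ z t i = 1.

Definition binary_interval (p : vec * vec) : Prop :=
  binary p.1 /\ binary p.2 /\ forall (t : 'I_T) (i : 'I_mu), p.1 t i <= p.2 t i.

Definition pairwise_disjoint (V : seq (vec * vec)) : Prop :=
  forall (j k : nat), (j < size V)%N -> (k < size V)%N -> j != k ->
  forall z : vec, ~ (in_box (nth (0, 0) V j).1 (nth (0, 0) V j).2 z /\
                     in_box (nth (0, 0) V k).1 (nth (0, 0) V k).2 z).

Definition covers_binary (V : seq (vec * vec)) : Prop :=
  forall z : vec, binary z -> exists2 p, p \in V & in_box p.1 p.2 z.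

Definition shift_blocks (a : vec) (c : R) : vec :=
  \matrix_(t < T, i < mu)
    match (insub t.+1 : option 'I_T) with Some t' => a t' i | None => c end.

Definition first_block_ok (v0 : 'I_mu -> R) (p : vec * vec) : bool :=
  [forall t : 'I_T, (val t == 0)%N ==>
     [forall i : 'I_mu, (p.1 t i <= v0 i) && (v0 i <= p.2 t i)]].

Definition next_collection (v0 : 'I_mu -> R) (V : seq (vec * vec))
  : seq (vec * vec) :=
  [seq (shift_blocks p.1 0, shift_blocks p.2 1) | p <- V & first_block_ok v0 p].

End Defs.

(* Prepending the block v0 to z and dropping its last block maps every
   shifted box of the new collection back into the box it came from, as long
   as the first block of that box contains v0.  Hence two overlapping new boxes
   would come from two overlapping old boxes, and a binary point z lies in the
   shifted version of any old box containing the (binary) prepended point. *)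
From HB Require Import structures.
From mathcomp Require Import all_boot all_order all_algebra.
Import Order.TTheory GRing.Theory Num.Theory.
Local Open Scope ring_scope.
Set Implicit Arguments. Unset Strict Implicit.

Section PairwiseDisjoint.
Variables (R : realFieldType) (T mu : nat).
Notation vec := 'M[R]_(T, mu).

Definition boxes_disjoint (p q : vec * vec) : Prop :=
  forall z : vec, ~ (in_box p.1 p.2 z /\ in_box q.1 q.2 z).

Lemma pairwise_disjoint_consP (a : vec * vec) V :
  pairwise_disjoint (a :: V) <->
  (forall q, q \in V -> boxes_disjoint a q) /\ pairwise_disjoint V.
Proof.
split=> [hV | [ha hV]].
- split=> [q qV z | j k hj hk hjk]; last exact: (hV j.+1 k.+1).
  by have := hV 0%N (index q V).+1 isT; rewrite /= ltnS index_mem nth_index //; apply.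
- move=> [|j] [|k] //= hj hk hjk z.
  + exact: (ha _ (mem_nth _ hk) z).
  + by move=> [hzj hza]; apply: (ha _ (mem_nth _ hj) z (conj hza hzj)).
  + exact: (hV j k hj hk hjk z).
Qed.

Lemma pairwise_disjoint_map_filter (P : pred (vec * vec))
    (f : vec * vec -> vec * vec) (g : vec -> vec) V :
  (forall p z, P p -> in_box (f p).1 (f p).2 z -> in_box p.1 p.2 (g z)) ->
  pairwise_disjoint V -> pairwise_disjoint [seq f p | p <- V & P p].
Proof.
move=> fg; elim: V => [_ [] | a V IH] //.
move=> /pairwise_disjoint_consP [ha /IH hV] /=; case: ifP => Pa //.
apply/pairwise_disjoint_consP; split=> // fq /mapP [q].
rewrite mem_filter => /andP [Pq qV] -> {fq} z [hza hzq].
by apply: (ha q qV (g z)); split; apply: fg.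
Qed.

End PairwiseDisjoint.

Section ShiftBlocks.
Variables (R : realFieldType) (T mu : nat).
Notation vec := 'M[R]_(T, mu).

Lemma binary_shift_blocks (a : vec) (c : R) :
  binary a -> c = 0 \/ c = 1 -> binary (shift_blocks a c).
Proof. by move=> ha hc t i; rewrite mxE; case: insubP. Qed.

Lemma shift_blocks_le (a b : vec) (c d : R) :
  (forall t i, a t i <= b t i) -> c <= d ->
  forall t i, shift_blocks a c t i <= shift_blocks b d t i.
Proof. by move=> hab hcd t i; rewrite !mxE; case: insubP. Qed.

Lemma binary_interval_shift_blocks (p : vec * vec) :
  binary_interval p -> binary_interval (shift_blocks p.1 0, shift_blocks p.2 1).
Proof.
move=> [h1 [h2 h12]]; split; [|split].
- by apply: binary_shift_blocks; first exact: h1; left.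
- by apply: binary_shift_blocks; first exact: h2; right.
- exact: shift_blocks_le h12 ler01.
Qed.

End ShiftBlocks.

Section PrependBlock.
Variables (R : realFieldType) (T mu : nat).
Notation vec := 'M[R]_(T.+1, mu).

Definition prepend_block (c : 'I_mu -> R) (z : vec) : vec :=
  \matrix_(t < T.+1, i < mu) if t == 0%N :> nat then c i else z (inord t.-1) i.

Lemma shift_blocksE (a : vec) (c : R) t i :
  shift_blocks a c t i = if (t < T)%N then a (inord t.+1) i else c.
Proof.
rewrite mxE; case: insubP => [t' ht e | /negbTE ht]; last by rewrite ifF.
by rewrite ifT // -e inord_val.
Qed.

Lemma prepend_blockE_succ (c : 'I_mu -> R) (z : vec) (t : 'I_T.+1) i :
  (t < T)%N -> prepend_block c z (inord t.+1) i = z t i.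
Proof. by move=> ht; rewrite mxE !inordK //= inord_val. Qed.

Lemma binary_prepend_block (c : 'I_mu -> R) (z : vec) :
  (forall i, c i = 0 \/ c i = 1) -> binary z -> binary (prepend_block c z).
Proof. by move=> hc hz t i; rewrite mxE; case: ifP. Qed.

Lemma first_block_okP (c : 'I_mu -> R) (p : vec * vec) :
  reflect (forall i, p.1 ord0 i <= c i <= p.2 ord0 i) (first_block_ok c p).
Proof.
apply: (iffP forallP) => [ok i | hc t]; last first.
  by apply/implyP => /eqP t0; apply/forallP => i; have -> : t = ord0 by apply: val_inj.
by have /implyP /(_ isT) /forallP := ok ord0.
Qed.

Lemma in_box_prepend_block (c : 'I_mu -> R) (p : vec * vec) (lo hi : R) z :
  (forall i, p.1 ord0 i <= c i <= p.2 ord0 i) ->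
  in_box (shift_blocks p.1 lo) (shift_blocks p.2 hi) z ->
  in_box p.1 p.2 (prepend_block c z).
Proof.
move=> hc hz t i; case: (posnP t) => [t0 | t_gt0].
  have -> : t = ord0 by apply: val_inj.
  by rewrite mxE /=; apply/andP; apply: hc.
set s : 'I_T.+1 := inord t.-1.
have ht : (t.-1 < T)%N by rewrite -ltnS prednK // ltn_ord.
have hs : s = t.-1 :> nat by rewrite inordK // leqW.
have -> : t = inord s.+1 by apply: ord_inj; rewrite inordK hs prednK.
rewrite prepend_blockE_succ ?hs //.
by have := hz s i; rewrite !shift_blocksE hs ht.
Qed.

Lemma in_box_shift_blocks (c : 'I_mu -> R) (p : vec * vec) (lo hi : R) z :
  in_box p.1 p.2 (prepend_block c z) ->
  (forall i, lo <= z ord_max i <= hi) ->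
  in_box (shift_blocks p.1 lo) (shift_blocks p.2 hi) z.
Proof.
move=> hz hlast t i; rewrite !shift_blocksE.
case: ltnP => [ht | hTt].
  by have := hz (inord t.+1) i; rewrite prepend_blockE_succ.
have -> : t = ord_max by apply: val_inj; apply/eqP; rewrite eqn_leq -ltnS ltn_ord.
by apply/andP; apply: hlast.
Qed.

End PrependBlock.

Theorem proposition1 (R : realFieldType) (T mu : nat)
  (hT : (0 < T)%N) (hmu : (0 < mu)%N)
  (V0 : seq ('M[R]_(T, mu) * 'M[R]_(T, mu)))
  (hint : forall p, p \in V0 -> binary_interval p)
  (hdisj : pairwise_disjoint V0)
  (hcov : covers_binary V0)
  (v0 : 'I_mu -> R) (hv0 : forall i, v0 i = 0 \/ v0 i = 1) :
  covers_binary (next_collection v0 V0) /\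
  pairwise_disjoint (next_collection v0 V0) /\
  (forall p, p \in next_collection v0 V0 -> binary_interval p).
Proof.
case: T hT V0 hint hdisj hcov => // T _ V0 hint hdisj hcov.
split; [|split].
- move=> z zb.
  have [p pV hp] := hcov _ (binary_prepend_block hv0 zb).
  have ok : forall i, p.1 ord0 i <= v0 i <= p.2 ord0 i.
    by move=> i; have := hp ord0 i; rewrite mxE /= => -[-> ->].
  exists (shift_blocks p.1 0, shift_blocks p.2 1).
    by apply/mapP; exists p; rewrite // mem_filter pV andbT; apply/first_block_okP.
  apply: in_box_shift_blocks hp _ => i.
  by case: (zb ord_max i) => ->; rewrite lexx ler01.
- apply: (pairwise_disjoint_map_filter (g := prepend_block v0)) hdisj.
  by move=> p z /first_block_okP; apply: in_box_prepend_block.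
- move=> fp /mapP [p]; rewrite mem_filter => /andP [_ pV] -> {fp}.
  exact: binary_interval_shift_blocks (hint p pV).
Qed.
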